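(* Let $M_{\mathrm{B_{vi}}}$ be the monoid with generators $a,b,c$ and relations $aba=bab$, $bcb=cbc$, $aca=bac$, $cab=bca$, $acb=cac$, $abb=bbc$, $bcca=ccac$, $bbac=caab$, $cbbb=bbba$, $acbcb=bccca$, $accbb=bccba$, $accaa=ccaac$, $caacc=aacca$, $acccc=bcccb$, $bbaac=cbaab$, $caaab=abaac$, $a^5=b^5$, $b^5=c^5$, $ccbaac=accbaa$; and let $M_{\mathrm{H_{iii}}}$ be the monoid with generators $a,b,c$ and relations $aba=bab$, $aca=cac$, $bcb=abc$, $cba=acb$, $bca=cbc$, $baa=aac$, $accb=ccbc$, $aabc=cbba$, $caaa=aaab$, $bcaca=acccb$, $bccaa=accab$, $bccbb=ccbbc$, $cbbcc=bbccb$, $bcccc=accca$, $aabbc=cabba$, $cbbba=babbc$, $a^5=b^5$, $b^5=c^5$, $ccabbc=bccabb$. Let $G_{\mathrm{B_{vi}}}$, $G_{\mathrm{H_{iii}}}$ be the groups with the same presentations and $G^+_{\mathrm{B_{vi}}}$, $G^+_{\mathrm{H_{iii}}}$ the submonoids generated by $a,b,c$. Then the correspondence $a\mapsto b$, $b\mapsto a$, $c\mapsto c$ induces a monoid isomorphism $M_{\mathrm{B_{vi}}}\cong M_{\mathrm{H_{iii}}}$, and hence also isomorphisms $G_{\mathrm{B_{vi}}}\cong G_{\mathrm{H_{iii}}}$ and $G^+_{\mathrm{B_{vi}}}\cong G^+_{\mathrm{H_{iii}}}$.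
   Context: A monoid given by generators and relations is the quotient of the free monoid on the generators by the congruence generated by the relations. *)

From Stdlib Require Import List.
Import ListNotations.

Inductive gen : Type := a | b | c.

(* The presented monoid is list T modulo this. *)
Inductive cong {T : Type} (R : list (list T * list T)) : list T -> list T -> Prop :=
| cong_rel : forall u v l r, In (l, r) R -> cong R (u ++ l ++ v) (u ++ r ++ v)
| cong_refl : forall w, cong R w w
| cong_sym : forall w1 w2, cong R w1 w2 -> cong R w2 w1
| cong_trans : forall w1 w2 w3, cong R w1 w2 -> cong R w2 w3 -> cong R w1 w3.

Definition pow5 (x : gen) : list gen := [x; x; x; x; x].

Definition rels_Bvi : list (list gen * list gen) := [
  ([a;b;a], [b;a;b]);
  ([b;c;b], [c;b;c]);
  ([a;c;a], [b;a;c]);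
  ([c;a;b], [b;c;a]);
  ([a;c;b], [c;a;c]);
  ([a;b;b], [b;b;c]);
  ([b;c;c;a], [c;c;a;c]);
  ([b;b;a;c], [c;a;a;b]);
  ([c;b;b;b], [b;b;b;a]);
  ([a;c;b;c;b], [b;c;c;c;a]);
  ([a;c;c;b;b], [b;c;c;b;a]);
  ([a;c;c;a;a], [c;c;a;a;c]);
  ([c;a;a;c;c], [a;a;c;c;a]);
  ([a;c;c;c;c], [b;c;c;c;b]);
  ([b;b;a;a;c], [c;b;a;a;b]);
  ([c;a;a;a;b], [a;b;a;a;c]);
  (pow5 a, pow5 b);
  (pow5 b, pow5 c);
  ([c;c;b;a;a;c], [a;c;c;b;a;a])
].

Definition rels_Hiii : list (list gen * list gen) := [
  ([a;b;a], [b;a;b]);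
  ([a;c;a], [c;a;c]);
  ([b;c;b], [a;b;c]);
  ([c;b;a], [a;c;b]);
  ([b;c;a], [c;b;c]);
  ([b;a;a], [a;a;c]);
  ([a;c;c;b], [c;c;b;c]);
  ([a;a;b;c], [c;b;b;a]);
  ([c;a;a;a], [a;a;a;b]);
  ([b;c;a;c;a], [a;c;c;c;b]);
  ([b;c;c;a;a], [a;c;c;a;b]);
  ([b;c;c;b;b], [c;c;b;b;c]);
  ([c;b;b;c;c], [b;b;c;c;b]);
  ([b;c;c;c;c], [a;c;c;c;a]);
  ([a;a;b;b;c], [c;a;b;b;a]);
  ([c;b;b;b;a], [b;a;b;b;c]);
  (pow5 a, pow5 b);
  (pow5 b, pow5 c);
  ([c;c;a;b;b;c], [b;c;c;a;b;b])
].

Definition swap_ab (x : gen) : gen :=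
  match x with a => b | b => a | c => c end.

(* Group presentations: the group with the same presentation is the monoid
   on letters x^{+1}, x^{-1} (pairs (x, false) = x, (x, true) = x^{-1}) with
   the relations R (on positive letters) together with x x^{-1} = 1 and
   x^{-1} x = 1 for every generator x. *)
Definition glet : Type := (gen * bool)%type.
Definition pos (w : list gen) : list glet := map (fun x => (x, false)) w.

Definition free_rels : list (list glet * list glet) :=
  flat_map (fun x => [([(x, false); (x, true)], []); ([(x, true); (x, false)], [])])
           [a; b; c].

Definition group_rels (R : list (list gen * list gen)) : list (list glet * list glet) :=
  map (fun p => (pos (fst p), pos (snd p))) R ++ free_rels.

Definition swap_glet (x : glet) : glet := (swap_ab (fst x), snd x).

(* Swapping a and b maps every defining relation of one presentation to a
   defining relation of the other, read in either direction, except
   b^5 = c^5, whose image a^5 = c^5 follows from a^5 = b^5 and b^5 = c^5.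
   Hence the letter substitution and its inverse (itself) both respect the
   congruences, which gives the monoid isomorphism; the relations
   x x^-1 = 1 = x^-1 x are only permuted, which gives the group statements. *)
From Stdlib Require Import List.
Import ListNotations.

Section Congruence.

Variable T : Type.
Variable R : list (list T * list T).

Lemma cong_of_rel l r : In (l, r) R -> cong R l r.
Proof.
  intro Hlr.
  pose proof (cong_rel R [] [] l r Hlr) as H.
  simpl in H; rewrite !app_nil_r in H; exact H.
Qed.

Lemma cong_app_ctx x y u v : cong R x y -> cong R (u ++ x ++ v) (u ++ y ++ v).
Proof.
  induction 1 as [u0 v0 l r Hlr| | |].
  - rewrite <- !app_assoc, (app_assoc u u0 (l ++ _)), (app_assoc u u0 (r ++ _)).
    now apply cong_rel.
  - apply cong_refl.
  - now apply cong_sym.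
  - eapply cong_trans; eassumption.
Qed.

End Congruence.

Arguments cong_of_rel {T R l r}.

Definition rels_respected {T U : Type} (f : T -> U)
    (R1 : list (list T * list T)) (R2 : list (list U * list U)) : Prop :=
  forall l r, In (l, r) R1 -> cong R2 (map f l) (map f r).

Lemma cong_map {T U : Type} (f : T -> U) R1 R2 :
  rels_respected f R1 R2 -> forall x y, cong R1 x y -> cong R2 (map f x) (map f y).
Proof.
  intros Hf x y H; induction H.
  - rewrite !map_app; apply cong_app_ctx; now apply Hf.
  - apply cong_refl.
  - now apply cong_sym.
  - eapply cong_trans; eassumption.
Qed.

Lemma cong_map_iff_of_involutive {T : Type} (f : T -> T) R1 R2 :
  (forall x, f (f x) = x) -> rels_respected f R1 R2 -> rels_respected f R2 R1 ->
  forall u v, cong R1 u v <-> cong R2 (map f u) (map f v).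
Proof.
  intros Hff H12 H21 u v; split.
  - exact (cong_map f R1 R2 H12 u v).
  - intro H.
    assert (Hmap : forall w, map f (map f w) = w).
    { intro w; rewrite map_map; erewrite map_ext by apply Hff; apply map_id. }
    rewrite <- (Hmap u), <- (Hmap v); exact (cong_map f R2 R1 H21 _ _ H).
Qed.

Lemma cong_pos R x y : cong R x y -> cong (group_rels R) (pos x) (pos y).
Proof.
  apply cong_map; intros l r Hlr.
  apply cong_of_rel, in_or_app; left.
  exact (in_map (fun p => (pos (fst p), pos (snd p))) R (l, r) Hlr).
Qed.

Lemma swap_ab_involutive x : swap_ab (swap_ab x) = x.
Proof. now destruct x. Qed.

Lemma swap_glet_involutive x : swap_glet (swap_glet x) = x.
Proof. now destruct x as [[] ?]. Qed.

Lemma map_swap_glet_pos w : map swap_glet (pos w) = pos (map swap_ab w).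
Proof. unfold pos; now rewrite !map_map. Qed.

Lemma group_rels_respected R1 R2 :
  rels_respected swap_ab R1 R2 ->
  rels_respected swap_glet (group_rels R1) (group_rels R2).
Proof.
  intros H l r Hlr; apply in_app_or in Hlr as [Hlr | Hlr].
  - apply in_map_iff in Hlr as [[x y] [Exy Hxy]]; injection Exy as <- <-.
    simpl; rewrite !map_swap_glet_pos; now apply cong_pos, H.
  - apply cong_of_rel, in_or_app; right.
    simpl in Hlr |- *.
    repeat (destruct Hlr as [Hlr | Hlr]; [injection Hlr as <- <-; simpl; tauto |]).
    destruct Hlr.
Qed.

Ltac rel_or_chain :=
  first [ apply cong_of_rel; simpl; tauto
        | apply cong_sym, cong_of_rel; simpl; tauto
        | eapply cong_trans; apply cong_of_rel; simpl; tauto ].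

Ltac respect_each_rel :=
  intros l r Hlr; simpl in Hlr;
  repeat (destruct Hlr as [Hlr | Hlr]; [injection Hlr as <- <-; simpl; rel_or_chain |]);
  destruct Hlr.

Lemma swap_ab_Bvi_Hiii : rels_respected swap_ab rels_Bvi rels_Hiii.
Proof. respect_each_rel. Qed.

Lemma swap_ab_Hiii_Bvi : rels_respected swap_ab rels_Hiii rels_Bvi.
Proof. respect_each_rel. Qed.

Theorem mainTheorem2 :
  (forall u v : list gen,
     cong rels_Bvi u v <-> cong rels_Hiii (map swap_ab u) (map swap_ab v)) /\
  (forall u v : list glet,
     cong (group_rels rels_Bvi) u v <->
     cong (group_rels rels_Hiii) (map swap_glet u) (map swap_glet v)) /\
  (forall u v : list gen,
     cong (group_rels rels_Bvi) (pos u) (pos v) <->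
     cong (group_rels rels_Hiii) (pos (map swap_ab u)) (pos (map swap_ab v))).
Proof.
  assert (Hgroup : forall u v : list glet,
     cong (group_rels rels_Bvi) u v <->
     cong (group_rels rels_Hiii) (map swap_glet u) (map swap_glet v)).
  { apply cong_map_iff_of_involutive.
    - exact swap_glet_involutive.
    - exact (group_rels_respected _ _ swap_ab_Bvi_Hiii).
    - exact (group_rels_respected _ _ swap_ab_Hiii_Bvi). }
  split; [| split].
  - exact (cong_map_iff_of_involutive swap_ab _ _ swap_ab_involutive
             swap_ab_Bvi_Hiii swap_ab_Hiii_Bvi).
  - exact Hgroup.
  - intros u v; rewrite <- !map_swap_glet_pos; apply Hgroup.
Qed.
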